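(* Let $L$ be an $r\times m$ integer matrix. There is $K_L>0$ depending only on $L$ such that for every positive integer $p$ there exist elements $j_1/p,\ldots,j_K/p\in J(L,p)$ with $K\le K_L$ such that \[J(L,p)=\bigsqcup_{k=1}^{K}\big(j_k/p+(\Lambda\cap\ker_{\mathbb{T}}L)\big)\] (a disjoint union, with addition in $\mathbb{T}^m$).
   Context: $\mathbb{T}=\mathbb{R}/\mathbb{Z}$, and $\mathbb{T}^m$ is identified with $[0,1)^m$ with coordinatewise addition mod 1. $\ker_{\mathbb{T}}L=\{x\in\mathbb{T}^m:Lx=0\}$ with normalized Haar probability measure $\mu_L$. For a positive integer $p$, $\Lambda=\Lambda(p)=\{j/p: j\in\mathbb{Z}_p^m\}\le\mathbb{T}^m$, where for $j=(j(1),\ldots,j(m))$ with $j(i)\in\{0,\ldots,p-1\}$ we write $j/p=(j(1)/p,\ldots,j(m)/p)$. Define $J(L,p)=\{j/p\in\Lambda:\ \mu_L\big((j/p+[0,1/p)^m)\cap\ker_{\mathbb{T}}L\big)>0\}$. *)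

From HB Require Import structures.
From mathcomp Require Import all_boot all_order all_algebra.
From mathcomp Require Import all_classical all_reals all_analysis.
Set Implicit Arguments. Unset Strict Implicit. Unset Printing Implicit Defensive.
Import Order.TTheory GRing.Theory Num.Theory.
Import numFieldNormedType.Exports.
Local Open Scope classical_set_scope.
Local Open Scope ring_scope.

(* Points of R^m are row vectors 'rV[R]_m; the torus T^m is identified with
   [0,1)^m, with coordinatewise addition mod 1. *)

Notation borelRm R m := (g_sigma_algebraType (@open 'rV[R]_m)).

Definition frac (R : realType) (x : R) : R := x - (Num.floor x)%:~R.

Definition torus (R : realType) (m : nat) : set 'rV[R]_m :=
  [set x | forall i, 0 <= x 0 i < 1].

Definition tadd (R : realType) (m : nat) (x y : 'rV[R]_m) : 'rV[R]_m :=
  \row_i frac (x 0 i + y 0 i).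

(* ker_T L = { x in T^m : L x = 0 in T^r }, i.e. every coordinate of L x is an integer *)
Definition kerT (R : realType) (r m : nat) (L : 'M[int]_(r, m)) : set 'rV[R]_m :=
  [set x | torus x /\ forall k : 'I_r, (\sum_(i < m) (L k i)%:~R * x 0 i) \is a Num.int].

Definition Lambda (R : realType) (m p : nat) : set 'rV[R]_m :=
  [set x | exists j : 'I_m -> 'I_p, x = \row_i ((j i)%:R / p%:R)].

Definition box (R : realType) (m p : nat) (x : 'rV[R]_m) : set 'rV[R]_m :=
  [set y | forall i, x 0 i <= y 0 i < x 0 i + p%:R^-1].

(* mu is (the extension by zero to [0,1)^m of) the normalized Haar probability
   measure of the compact group ker_T L: a Borel probability measure on R^m,
   concentrated on ker_T L, and invariant under translations (mod 1) by
   elements of ker_T L.  Such a measure exists and is unique. *)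
Definition is_Haar_kerT (R : realType) (r m : nat) (L : 'M[int]_(r, m))
    (mu : {measure set (borelRm R m) -> \bar R}) : Prop :=
  [/\ mu setT = 1%E,
      mu (~` (kerT L : set (borelRm R m))) = 0%E &
      forall (x : 'rV[R]_m) (A : set (borelRm R m)), kerT L x ->
        measurable A ->
        measurable ([set y | A (tadd y x)] : set (borelRm R m)) ->
        mu [set y | A (tadd y x)] = mu A].

Definition Jset (R : realType) (r m : nat) (L : 'M[int]_(r, m))
    (mu : {measure set (borelRm R m) -> \bar R}) (p : nat) : set 'rV[R]_m :=
  [set x | @Lambda R m p x /\
           (0 < mu ((box p x `&` kerT L) : set (borelRm R m)))%E].

From Pilot Require Import Defs.
From HB Require Import structures.
From mathcomp Require Import all_boot all_order all_algebra.
From mathcomp Require Import all_classical all_reals all_analysis.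
From mathcomp Require Import lra ring.
Set Implicit Arguments. Unset Strict Implicit. Unset Printing Implicit Defensive.
Import Order.TTheory GRing.Theory Num.Theory.
Import numFieldNormedType.Exports.
Local Open Scope classical_set_scope.
Local Open Scope ring_scope.

(* A point j/p of Lambda lies in ker_T L iff L j = 0 (mod p), and adding such
   points is addition in (Z/p)^m; hence the cosets of Lambda /\ ker_T L in Lambda
   are the fibres of the residue map j |-> L j mod p.  Translation by a point of
   ker_T L preserves mu_L and carries the box at j/p into the box at the
   translated point, so J(L,p) is a union of such cosets.  Finally, if y lies
   in ker_T L and in the box at j/p, then p (L y) is in p Z^r and every entry of
   p (L y) - L j has absolute value at most the row-sum norm N of L; so the
   residues of L j for j/p in J(L,p) take at most (2 N + 1)^r values. *)

Section Frac.
Variable R : realType.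
Implicit Types (t : R) (z : int).

Lemma frac_ge0 t : 0 <= Defs.frac t.
Proof. by rewrite /Defs.frac subr_ge0 floor_le. Qed.

Lemma frac_lt1 t : Defs.frac t < 1.
Proof. by rewrite /Defs.frac ltrBlDl -intrD1 lt_succ_floor. Qed.

Lemma frac_eq z t : z%:~R <= t < z%:~R + 1 -> Defs.frac t = t - z%:~R.
Proof. by move=> zt; rewrite /Defs.frac (floor_def (m := z)) // intrD1. Qed.

Lemma measurable_Num_int : measurable [set t : R | t \is a Num.int].
Proof.
rewrite [X in measurable X](_ : _ = \bigcup_(z : int) [set z%:~R]).
  exact: countable_bigcupT_measurable.
by apply/seteqP; split=> t /= => [/intrP[z ->]|[z _ ->]]; [exists z|exact: intr_int].
Qed.

Lemma measurable_frac : measurable_fun [set: R] (@Defs.frac R).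
Proof.
apply: (measurability _ (measurable_realfun.RGenOpens.measurableE R)).
move=> _ [_ [a [b ->]] <-]; rewrite setTI.
rewrite [X in measurable X](_ : _ =
  \bigcup_(z : int) (`[z%:~R, z%:~R + 1[ `&` `]z%:~R + a, z%:~R + b[)).
  by apply: countable_bigcupT_measurable => // z; apply: measurableI.
apply/seteqP; split=> t /=; rewrite !in_itv /=.
  move=> abt; exists (Num.floor t) => //=; rewrite !in_itv /= -intrD1 floor_itv.
  by split=> //; move: abt; rewrite /Defs.frac => /andP[? ?]; apply/andP; split; lra.
move=> [z _ /= []]; rewrite !in_itv /= => zt /andP[? ?]; rewrite (frac_eq zt).
by apply/andP; split; lra.
Qed.

End Frac.

Section BorelRow.
Variables (R : realType) (m : nat).

Lemma continuous_measurable_rV (f : 'rV[R]_m -> R) :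
  continuous f -> measurable_fun [set: borelRm R m] f.
Proof.
move=> /continuousP cf.
apply: (measurability _ (measurable_realfun.RGenOpens.measurableE R)).
move=> _ [_ [a [b ->]] <-]; rewrite setTI; apply: sub_sigma_algebra.
exact/cf/interval_open.
Qed.

Lemma measurable_forall n (F : 'I_n -> set (borelRm R m)) :
  (forall i, measurable (F i)) -> measurable [set y | forall i, F i y].
Proof.
move=> mF; rewrite [X in measurable X](_ : _ = \bigcap_i F i).
  by apply: fin_bigcap_measurable; [exact: finite_finset | move=> i _].
by apply/seteqP; split=> y /= Fy i => [_|]; exact: Fy.
Qed.

End BorelRow.

Section Grid.
Variables (R : realType) (r m p : nat) (L : 'M[int]_(r, m)).
Hypothesis p_gt0 : (0 < p)%N.

Let p_ne0 : p%:R != 0 :> R. Proof. by rewrite pnatr_eq0 -lt0n. Qed.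
Let p_pos : 0 < p%:R :> R. Proof. by rewrite ltr0n. Qed.

Lemma natr_div_addinv_le1 (k : nat) : (k < p)%N -> k%:R / p%:R + p%:R^-1 <= 1 :> R.
Proof.
move=> kp; have -> : k%:R / p%:R + p%:R^-1 = k.+1%:R / p%:R :> R.
  by rewrite -natr1 mulrDl mul1r.
by rewrite ler_pdivrMr // mul1r ler_nat.
Qed.

Lemma frac_divn_add (n : nat) (s : R) : 0 <= s < p%:R^-1 ->
  Defs.frac (n%:R / p%:R + s) = (n %% p)%:R / p%:R + s.
Proof.
move=> /andP[s_ge0 s_lt].
have np : n%:R / p%:R = (n %/ p)%:R + (n %% p)%:R / p%:R :> R.
  by rewrite {1}(divn_eq n p) natrD natrM; field.
have r_le := natr_div_addinv_le1 (ltn_pmod n p_gt0).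
have r_ge0 : 0 <= (n %% p)%:R / p%:R :> R by rewrite divr_ge0.
rewrite np -addrA (frac_eq (z := (n %/ p)%:Z)) /=; first by ring.
by rewrite pmulrn; apply/andP; split; lra.
Qed.

Definition gridpt (a : {ffun 'I_m -> 'I_p}) : 'rV[R]_m :=
  \row_i ((a i)%:R / p%:R).

Definition gridD (a b : {ffun 'I_m -> 'I_p}) : {ffun 'I_m -> 'I_p} :=
  [ffun i => Ordinal (ltn_pmod (a i + b i) p_gt0)].

Lemma gridD_surj (a b : {ffun 'I_m -> 'I_p}) : exists d, b = gridD a d.
Proof.
exists [ffun i => Ordinal (ltn_pmod (b i + (p - a i)) p_gt0)].
apply/ffunP => i; apply: val_inj; rewrite !ffunE /=.
rewrite modnDmr addnCA subnKC; last exact: ltnW.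
by rewrite addnC modnDl modn_small.
Qed.

Lemma gridpt_inj : injective gridpt.
Proof.
move=> a b /rowP ab; apply/ffunP => i; apply: val_inj.
have := ab i; rewrite !mxE => /(congr1 ( *%R^~ p%:R)) /=.
by rewrite !mulfVK // => /eqP; rewrite eqr_nat => /eqP.
Qed.

Lemma Lambda_gridpt : @Lambda R m p = range gridpt.
Proof.
apply/seteqP; split=> x /= => [[j ->]|[a _ <-]]; last by exists a.
by exists [ffun i => j i] => //; apply/rowP => i; rewrite !mxE ffunE.
Qed.

Lemma gridpt_bounds a i : 0 <= gridpt a 0 i /\ gridpt a 0 i + p%:R^-1 <= 1.
Proof.
by rewrite mxE divr_ge0 // natr_div_addinv_le1.
Qed.

Lemma tadd_gridpt a b : tadd (gridpt a) (gridpt b) = gridpt (gridD a b).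
Proof.
apply/rowP => i; rewrite !mxE ffunE -mulrDl -natrD.
by rewrite -[X in Defs.frac X]addr0 frac_divn_add ?addr0 // lexx invr_gt0.
Qed.

Lemma box_gridpt_tadd c d y : box p (gridpt c) y ->
  box p (gridpt (gridD c d)) (tadd y (gridpt d)).
Proof.
move=> cy i; have := cy i; rewrite !mxE ffunE /= => /andP[lo hi].
have -> : y 0 i + (d i)%:R / p%:R =
    (c i + d i)%:R / p%:R + (y 0 i - (c i)%:R / p%:R).
  by rewrite natrD mulrDl; ring.
by rewrite frac_divn_add; apply/andP; split; lra.
Qed.

Definition Lres (a : {ffun 'I_m -> 'I_p}) : {ffun 'I_r -> int} :=
  [ffun k => ((\sum_i L k i * (a i)%:Z) %% p)%Z].

Lemma intr_divp_int (s : int) : (s%:~R / p%:R : R) \is a Num.int = (p %| s)%Z.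
Proof.
apply/idP/idP => [/intrP[z sz]|/dvdzP[z ->]]; last by rewrite intrM mulfK ?intr_int.
by apply/dvdzP; exists z; apply: (@intr_inj R); rewrite intrM -sz mulfVK.
Qed.

Lemma kerT_gridpt a : kerT L (gridpt a) <-> Lres a = 0.
Proof.
have sumE k : \sum_i (L k i)%:~R * gridpt a 0 i =
    (\sum_i L k i * (a i)%:Z)%:~R / p%:R :> R.
  by rewrite rmorph_sum mulr_suml; apply: eq_bigr => i _; rewrite mxE rmorphM /= mulrA.
split=> [[_ ker_a]|La0].
  by apply/ffunP => k; rewrite !ffunE; apply/dvdz_mod0P; rewrite -(intr_divp_int) -sumE.
split=> [i|k].
  have [? le1] := gridpt_bounds a i; apply/andP; split => //.
  by apply: lt_le_trans le1; rewrite ltrDl invr_gt0.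
rewrite sumE intr_divp_int; apply/dvdz_mod0P.
by move/ffunP/(_ k): La0; rewrite !ffunE.
Qed.

Lemma Lres_gridD a d : Lres (gridD a d) = Lres a <-> Lres d = 0.
Proof.
have sumD k : (\sum_i L k i * (gridD a d i)%:Z =
    \sum_i L k i * (a i)%:Z + \sum_i L k i * (d i)%:Z %[mod p])%Z.
  apply/eqP; rewrite eqz_mod_dvd -big_split -sumrB /=; apply: rpred_sum => i _.
  rewrite ffunE /= -mulrDr -mulrBr dvdz_mull // -PoszD -modz_nat.
  apply/dvdzP; exists (- ((a i + d i)%N %/ p)%Z).
  by rewrite {2}(divz_eq (a i + d i)%N p); ring.
split=> [adE|d0]; apply/ffunP => k.
  move/ffunP/(_ k): adE; rewrite !ffunE sumD => /eqP.
  by rewrite -[X in (_ == X %[mod _])%Z]addr0 eqz_modDl mod0z => /eqP.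
move/ffunP/(_ k): d0; rewrite !ffunE sumD => d0.
by rewrite -modzDmr d0 addr0.
Qed.

Lemma coset_gridpt c :
  tadd (gridpt c) @` (@Lambda R m p `&` kerT L) = gridpt @` [set b | Lres b = Lres c].
Proof.
rewrite Lambda_gridpt; apply/seteqP; split=> z.
  move=> [y [[d _ <-] /kerT_gridpt/(Lres_gridD c) dc] <-].
  by exists (gridD c d); rewrite ?tadd_gridpt.
move=> [b bc <-]; have [d bE] := gridD_surj c b; rewrite bE in bc *.
exists (gridpt d); last exact: tadd_gridpt.
by split; [exists d | apply/kerT_gridpt/(Lres_gridD c)].
Qed.

End Grid.

Arguments gridpt R {m p} a.

Section Window.
Variables (r m p : nat) (L : 'M[int]_(r, m)).
Hypothesis p_gt0 : (0 < p)%N.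

Definition rownorm : nat := \max_(k < r) \sum_(i < m) `|L k i|%N.

Definition window_res (w : {ffun 'I_r -> 'I_rownorm.*2.+1}) : {ffun 'I_r -> int} :=
  [ffun k => (((w k)%:Z - rownorm%:Z) %% p)%Z].

Lemma int_window (M : nat) (v : int) :
  (`|v| <= M)%N -> exists w : 'I_M.*2.+1, v = (w%:Z - M%:Z)%R.
Proof.
move=> vM; have vM' : (- M%:Z <= v <= M%:Z)%R by rewrite -ler_norml -abszE lez_nat.
have w_ge0 : (0 <= v + M%:Z)%R by rewrite -lerBlDr sub0r; case/andP: vM'.
have w_lt : (absz (v + M%:Z)%R < M.*2.+1)%N.
  by rewrite ltnS -lez_nat gez0_abs // -addnn PoszD lerD2r; case/andP: vM'.
by exists (Ordinal w_lt); rewrite /= gez0_abs ?addrK.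
Qed.

Lemma box_kerT_residue (R : realType) (c : {ffun 'I_m -> 'I_p}) (y : 'rV[R]_m) k :
  box p (gridpt R c) y -> kerT L y ->
  exists2 v : int, (`|v| <= rownorm)%N & (\sum_i L k i * (c i)%:Z = v %[mod p])%Z.
Proof.
move=> cy [_ ky]; have /intrP[z zE] := ky k.
have p_pos : 0 < p%:R :> R by rewrite ltr0n.
exists (\sum_i L k i * (c i)%:Z - z * p%:Z); last first.
  by apply/eqP; rewrite eqz_mod_dvd opprB addrC subrK dvdz_mull.
have vE : (\sum_i L k i * (c i)%:Z - z * p%:Z)%:~R =
    \sum_i (L k i)%:~R * ((c i)%:R - p%:R * y 0 i) :> R.
  rewrite intrB intrM -zE rmorph_sum mulr_suml -sumrB.
  by apply: eq_bigr => i _; rewrite rmorphM /=; ring.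
rewrite -(ler_nat R) natr_absz intr_norm vE.
apply: le_trans (ler_norm_sum _ _ _) _.
apply: (@le_trans _ _ (\sum_i (`|L k i|%N)%:R)).
  apply: ler_sum => i _; rewrite normrM natr_absz intr_norm ler_piMr //.
  have := cy i; rewrite mxE => /andP[lo hi].
  have lo' : (c i)%:R <= p%:R * y 0 i by rewrite mulrC -ler_pdivrMr.
  have hi' : p%:R * y 0 i < (c i)%:R + 1.
    by rewrite mulrC -ltr_pdivlMr // mulrDl mul1r.
  by rewrite ler_norml; apply/andP; split; lra.
by rewrite -natr_sum ler_nat (leq_bigmax k).
Qed.

Lemma Lres_window (R : realType) (c : {ffun 'I_m -> 'I_p}) (y : 'rV[R]_m) :
  box p (gridpt R c) y -> kerT L y -> exists w, Lres L c = window_res w.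
Proof.
move=> cy ky.
have /fin_all_exists[w Lw] : forall k, exists w : 'I_rownorm.*2.+1,
    (\sum_i L k i * (c i)%:Z = w%:Z - rownorm%:Z %[mod p])%Z.
  move=> k; have [v vM cv] := box_kerT_residue k cy ky.
  by have [w vw] := int_window vM; exists w; rewrite -vw.
by exists [ffun k => w k]; apply/ffunP => k; rewrite !ffunE Lw.
Qed.

End Window.

Section Translation.
Variables (R : realType) (r m p : nat) (L : 'M[int]_(r, m)).

Lemma kerT_tadd (x y : 'rV[R]_m) : kerT L x -> kerT L y -> kerT L (tadd y x).
Proof.
move=> [_ kx] [_ ky]; split=> [i|k]; first by rewrite mxE frac_ge0 frac_lt1.
have -> : \sum_i (L k i)%:~R * tadd y x 0 i =
    \sum_i (L k i)%:~R * y 0 i + \sum_i (L k i)%:~R * x 0 i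
    - (\sum_i L k i * Num.floor (y 0 i + x 0 i))%:~R.
  rewrite rmorph_sum -big_split -sumrB; apply: eq_bigr => i _.
  by rewrite mxE /Defs.frac rmorphM /=; ring.
by rewrite rpredB ?rpredD ?intr_int.
Qed.

Lemma measurable_preimage_box_kerT (a : 'rV[R]_m) (f : 'rV[R]_m -> 'rV[R]_m) :
  (forall i, measurable_fun [set: borelRm R m] (fun y => f y 0 i)) ->
  measurable ([set y | (box p a `&` kerT L) (f y)] : set (borelRm R m)).
Proof.
move=> mf.
have pre (g : 'rV[R]_m -> R) (A : set R) : measurable_fun [set: borelRm R m] g ->
    measurable A -> measurable ([set y | A (g y)] : set (borelRm R m)).
  by move=> mg mA; rewrite -[X in measurable X]setTI; exact: mg.
have -> : [set y | (box p a `&` kerT L) (f y)] =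
    [set y | forall i, f y 0 i \in `[a 0 i, a 0 i + p%:R^-1[] `&`
    [set y | forall i, f y 0 i \in `[0, 1[] `&`
    [set y | forall k, [set t : R | t \is a Num.int]
                         (\sum_i (L k i)%:~R * f y 0 i)].
  apply/seteqP; split=> y /=.
    by move=> [ay [fy ky]]; split; [split|] => // i; rewrite in_itv /= ?ay ?fy.
  by move=> [[ay fy] ky]; split; [|split] => // i; have := ay i; have := fy i;
    rewrite !in_itv.
apply: measurableI; first apply: measurableI; apply: measurable_forall => i.
- exact: pre _ _ (mf i) (measurable_itv _).
- exact: pre _ _ (mf i) (measurable_itv _).
have msum : measurable_fun [set: borelRm R m] (fun y => \sum_j (L i j)%:~R * f y 0 j).
  apply: measurable_sum => j.
  exact: measurableT_comp (measurable_realfun.mulrl_measurable _) (mf j).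
exact: (pre _ [set t : R | t \is a Num.int] msum (@measurable_Num_int R)).
Qed.

Lemma measurable_box_kerT (a : 'rV[R]_m) :
  measurable ((box p a `&` kerT L) : set (borelRm R m)).
Proof.
apply: (@measurable_preimage_box_kerT a id) => i.
by apply: continuous_measurable_rV => y; exact: coord_continuous.
Qed.

Lemma measurable_tadd_box_kerT (a x : 'rV[R]_m) :
  measurable ([set y | (box p a `&` kerT L) (tadd y x)] : set (borelRm R m)).
Proof.
apply: measurable_preimage_box_kerT => i.
rewrite (_ : (fun y => _) = @Defs.frac R \o (fun y : 'rV[R]_m => y 0 i + x 0 i)).
  apply: measurableT_comp; first exact: measurable_frac.
  apply: continuous_measurable_rV => y.
  by apply: continuousD; [exact: coord_continuous | exact: cst_continuous].
by apply/funext => y; rewrite mxE.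
Qed.

End Translation.

Section Decomposition.
Variables (R : realType) (r m p : nat) (L : 'M[int]_(r, m)).
Variable mu : {measure set (borelRm R m) -> \bar R}.
Hypotheses (mu_Haar : is_Haar_kerT L mu) (p_gt0 : (0 < p)%N).

(* Translation by the kernel point [gridpt R d] preserves [mu] and carries the
   box at [c] into the box at [gridD c d]. *)
Lemma Jset_Lres (c b : {ffun 'I_m -> 'I_p}) :
  Jset L mu p (gridpt R c) -> Lres L b = Lres L c -> Jset L mu p (gridpt R b).
Proof.
move=> [_ c_pos] bc; have [d bE] := gridD_surj p_gt0 c b; rewrite bE in bc *.
have kd : kerT L (gridpt R d) by apply/kerT_gridpt/(Lres_gridD _ _ c).
split; first by exists (gridD p_gt0 c d).
have [_ _ mu_inv] := mu_Haar.
rewrite -(mu_inv _ _ kd (measurable_box_kerT p L _) (measurable_tadd_box_kerT p L _ _)).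
apply: (lt_le_trans c_pos); apply: le_measure; rewrite ?inE.
- exact: measurable_box_kerT.
- exact: measurable_tadd_box_kerT.
by move=> y [cy ky]; split; [exact: box_gridpt_tadd | exact: kerT_tadd].
Qed.

Let inJ (a : {ffun 'I_m -> 'I_p}) : bool := `[< Jset L mu p (gridpt R a) >].

Definition Jclasses : seq {ffun 'I_r -> int} :=
  undup [seq Lres L a | a <- enum inJ].

Definition Jrep (s : {ffun 'I_r -> int}) : {ffun 'I_m -> 'I_p} :=
  odflt [ffun=> Ordinal p_gt0] [pick a | inJ a & Lres L a == s].

Definition Jreps : seq 'rV[R]_m := [seq gridpt R (Jrep s) | s <- Jclasses].

Lemma mem_Jclasses (a : {ffun 'I_m -> 'I_p}) : Jset L mu p (gridpt R a) -> Lres L a \in Jclasses.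
Proof. by move=> Ja; rewrite mem_undup map_f // mem_enum; apply/asboolP. Qed.

Lemma Jclasses_rep s : s \in Jclasses ->
  Jset L mu p (gridpt R (Jrep s)) /\ Lres L (Jrep s) = s.
Proof.
rewrite mem_undup => /mapP[a]; rewrite mem_enum inE => /asboolT Ja ->.
rewrite /Jrep; case: pickP => [b /andP[/asboolP Jb /eqP //]|/(_ a)].
by rewrite /inJ Ja eqxx.
Qed.

Lemma size_Jclasses : (size Jclasses <= (rownorm L).*2.+1 ^ r)%N.
Proof.
have -> : ((rownorm L).*2.+1 ^ r)%N =
    size [seq window_res p w | w <- enum {ffun 'I_r -> 'I_(rownorm L).*2.+1}].
  by rewrite size_map -cardE card_ffun !card_ord.
apply: uniq_leq_size => [|s /Jclasses_rep[[_ Jpos] <-]]; first exact: undup_uniq.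
have [y [cy ky]] : (box p (gridpt R (Jrep s)) `&` kerT L) !=set0.
  by apply/set0P; apply: contraTneq Jpos => ->; rewrite measure0 ltxx.
by have [w ->] := Lres_window p_gt0 cy ky; rewrite map_f ?mem_enum.
Qed.

Lemma coset_Jreps (k : 'I_(size Jreps)) :
  tadd (nth 0 Jreps k) @` (@Lambda R m p `&` kerT L) =
  gridpt R @` [set b : {ffun 'I_m -> 'I_p} | Lres L b = nth 0 Jclasses k].
Proof.
have kc : (k < size Jclasses)%N by rewrite -(size_map (gridpt R \o Jrep)).
by rewrite (nth_map 0) // (coset_gridpt _ _ p_gt0) (Jclasses_rep (mem_nth 0 kc)).2.
Qed.

Lemma Jset_bigcup_cosets : Jset L mu p = \bigcup_(k in [set: 'I_(size Jreps)])
  (tadd (nth 0 Jreps k) @` (@Lambda R m p `&` kerT L)).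
Proof.
apply/seteqP; split=> [x Jx|x [k _]].
  have [a _ xa] : range (@gridpt R m p) x by rewrite -Lambda_gridpt; exact: Jx.1.
  rewrite -xa in Jx *.
  have ka : (index (Lres L a) Jclasses < size Jreps)%N.
    by rewrite size_map index_mem mem_Jclasses.
  by exists (Ordinal ka) => //; rewrite coset_Jreps /= nth_index ?mem_Jclasses //; exists a.
have kc : (k < size Jclasses)%N by rewrite -(size_map (gridpt R \o Jrep)).
rewrite coset_Jreps => -[b bk <-]; have [Jrep_k rep_res] := Jclasses_rep (mem_nth 0 kc).
by apply: Jset_Lres Jrep_k _; rewrite rep_res.
Qed.

Lemma trivIset_cosets : trivIset [set: 'I_(size Jreps)]
  (fun k => tadd (nth 0 Jreps k) @` (@Lambda R m p `&` kerT L)).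
Proof.
move=> k l _ _ [z []]; rewrite !coset_Jreps => -[b bk <-] [b' bl /gridpt_inj bb'].
have sizeE : size Jreps = size Jclasses by rewrite size_map.
have [kc lc] : (k < size Jclasses)%N /\ (l < size Jclasses)%N by rewrite -sizeE.
apply: val_inj; apply/eqP; rewrite -(nth_uniq 0 kc lc (undup_uniq _)).
by rewrite -bk -bl bb'.
Qed.

End Decomposition.

Unset Implicit Arguments.

Theorem lemma2p4 (R : realType) (r m : nat) (L : 'M[int]_(r, m)) :
  exists KL : nat, (0 < KL)%N /\
  forall mu : {measure set (borelRm R m) -> \bar R}, is_Haar_kerT L mu ->
  forall p : nat, (0 < p)%N ->
  exists js : seq 'rV[R]_m,
    [/\ (size js <= KL)%N,
        (forall j, j \in js -> Jset L mu p j),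
        Jset L mu p = \bigcup_(k in [set: 'I_(size js)])
                        (tadd (nth 0 js k) @` (@Lambda R m p `&` kerT L)) &
        trivIset [set: 'I_(size js)]
          (fun k => tadd (nth 0 js k) @` (@Lambda R m p `&` kerT L))].
Proof.
exists ((rownorm L).*2.+1 ^ r)%N; split; first by rewrite expn_gt0.
move=> mu mu_Haar p p_gt0; exists (Jreps L mu p_gt0); split.
- by rewrite size_map size_Jclasses.
- by move=> _ /mapP[s /Jclasses_rep[Js _] ->].
- exact: Jset_bigcup_cosets.
- exact: trivIset_cosets.
Qed.
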